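(* Let $h$ be a penalty function on the simplex $\Delta=\Delta(\{1,\dots,n\})\subset\mathbb{R}^n$ and let $Q(y)=\arg\max_{x\in\Delta}\{\langle y,x\rangle-h(x)\}$, $y\in\mathbb{R}^n$, be its induced choice map. Then: (i) $Q(y')=Q(y)$ for all $y,y'\in\mathbb{R}^n$ with $y'-y$ proportional to $(1,\dots,1)$; (ii) $Q(y-te_\beta)=Q(y)$ for all $t\ge0$ and all $y\in\mathbb{R}^n$ such that $Q_\beta(y)=0$; (iii) for every sequence $y_j\in\mathbb{R}^n$ with $y_{j,\alpha}-y_{j,\beta}\to-\infty$ for some $\beta\ne\alpha$, $Q_\alpha(y_j)\to0$.
   Context: A penalty function on $\Delta$ is $h:\Delta\to\mathbb{R}$ that is continuous, $C^\infty$ on the relative interior of every face of $\Delta$, and strongly convex: for some $K>0$ and norm $\|\cdot\|$, $h(tx_1+(1-t)x_2)\le th(x_1)+(1-t)h(x_2)-\tfrac12Kt(1-t)\|x_1-x_2\|^2$ for all $x_1,x_2\in\Delta$, $t\in[0,1]$. $e_\beta$ denotes the $\beta$-th standard basis vector. *)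

From HB Require Import structures.
From mathcomp Require Import all_boot all_order all_algebra.
From mathcomp Require Import all_classical all_reals all_analysis.
Set Implicit Arguments. Unset Strict Implicit. Unset Printing Implicit Defensive.
Import Order.TTheory GRing.Theory Num.Theory.
Import numFieldNormedType.Exports.
Local Open Scope classical_set_scope.
Local Open Scope ring_scope.

(* Points of R^n are row vectors 'rV[R]_n; coordinate alpha of x is x ord0 alpha. *)

Definition simplex (R : realType) (n : nat) : set 'rV[R]_n :=
  [set x | (forall i, 0 <= x ord0 i) /\ \sum_i x ord0 i = 1].

Arguments simplex {R n}.

Definition inner (R : realType) (n : nat) (y x : 'rV[R]_n) : R :=
  \sum_i y ord0 i * x ord0 i.

Definition ebasis (R : realType) (n : nat) (b : 'I_n) : 'rV[R]_n :=
  \row_i (i == b)%:R.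

Definition ones (R : realType) (n : nat) : 'rV[R]_n := const_mx 1.

Arguments ones {R n}.
Arguments ebasis {R n}.

Definition is_norm (R : realType) (n : nat) (N : 'rV[R]_n -> R) : Prop :=
  (forall x, N x = 0 -> x = 0) /\
  (forall (a : R) x, N (a *: x) = `|a| * N x) /\
  (forall x y, N (x + y) <= N x + N y).

Definition face_relint (R : realType) (n : nat) (S : {set 'I_n}) : set 'rV[R]_n :=
  [set x | simplex x /\ (forall i, i \in S -> 0 < x ord0 i)
                            /\ (forall i, i \notin S -> x ord0 i = 0)].

Arguments face_relint {R n}.

Definition face_dir (R : realType) (n : nat) (S : {set 'I_n}) : set 'rV[R]_n :=
  [set v | \sum_i v ord0 i = 0 /\ (forall i, i \notin S -> v ord0 i = 0)].

Arguments face_dir {R n}.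

Fixpoint iter_dderiv (R : realType) (n : nat) (f : 'rV[R]_n -> R)
    (vs : seq 'rV[R]_n) : 'rV[R]_n -> R :=
  match vs with
  | [::] => f
  | v :: vs' => fun x => 'D_v (iter_dderiv f vs') x
  end.

Definition smooth_on (R : realType) (n : nat) (f : 'rV[R]_n -> R)
    (U V : set 'rV[R]_n) : Prop :=
  forall vs : seq 'rV[R]_n, (forall v, v \in vs -> V v) ->
    {within U, continuous (iter_dderiv f vs)} /\
    (forall v, V v -> forall x, U x -> derivable (iter_dderiv f vs) x v).

Definition penalty (R : realType) (n : nat) (h : 'rV[R]_n -> R) : Prop :=
  {within simplex, continuous h} /\
  (forall S : {set 'I_n}, S != finset.set0 ->
     smooth_on h (face_relint S) (face_dir S)) /\
  (exists (K : R) (N : 'rV[R]_n -> R), 0 < K /\ is_norm N /\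
     forall x1 x2, simplex x1 -> simplex x2 ->
     forall t : R, 0 <= t <= 1 ->
       h (t *: x1 + (1 - t) *: x2) <=
         t * h x1 + (1 - t) * h x2 - 2^-1 * K * t * (1 - t) * (N (x1 - x2)) ^+ 2).

Definition is_argmax (R : realType) (n : nat) (h : 'rV[R]_n -> R)
    (y x : 'rV[R]_n) : Prop :=
  simplex x /\
  forall x', simplex x' -> inner y x' - h x' <= inner y x - h x.

(* The induced choice map Q(y) = argmax_{x in Delta} {<y,x> - h(x)}
   (the maximizer, which exists and is unique for a penalty function). *)
Definition choice_map (R : realType) (n : nat) (h : 'rV[R]_n -> R)
    (y : 'rV[R]_n) : 'rV[R]_n :=
  xget 0 [set x | is_argmax h y x].

(* (i) and (ii) only use the maximization property: adding [c *: ones] shifts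
   the objective by the constant [c] on the simplex, and lowering [y_b] leaves
   the value at a maximizer with [x_b = 0] unchanged while it can only lower
   every other value.  For (iii), moving the mass [x_a] of the maximizer [x]
   onto coordinate [b] raises the linear part by [x_a (y_b - y_a)] and changes
   [h] by at most its oscillation [M] over the compact simplex, so
   [x_a (y_b - y_a) <= M], which forces [x_a -> 0]. *)
From HB Require Import structures.
From mathcomp Require Import all_boot all_order all_algebra.
From mathcomp Require Import all_classical all_reals all_analysis.
From mathcomp Require Import lra.
Import Order.TTheory GRing.Theory Num.Theory.
Import numFieldNormedType.Exports.
Local Open Scope classical_set_scope.
Local Open Scope ring_scope.

Section ChoiceMap.
Context {R : realType} {n : nat}.
Implicit Types (x y u v : 'rV[R]_n) (h : 'rV[R]_n -> R).

Lemma innerDr y u v : inner y (u + v) = inner y u + inner y v.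
Proof. by rewrite /inner -big_split; apply: eq_bigr => i _; rewrite !mxE mulrDr. Qed.

Lemma innerZr y a u : inner y (a *: u) = a * inner y u.
Proof. by rewrite /inner mulr_sumr; apply: eq_bigr => i _; rewrite !mxE mulrCA. Qed.

Lemma innerBr y u v : inner y (u - v) = inner y u - inner y v.
Proof. by rewrite innerDr -scaleN1r innerZr mulN1r. Qed.

Lemma innerDl y y' u : inner (y + y') u = inner y u + inner y' u.
Proof. by rewrite /inner -big_split; apply: eq_bigr => i _; rewrite !mxE mulrDl. Qed.

Lemma innerZl a y u : inner (a *: y) u = a * inner y u.
Proof. by rewrite /inner mulr_sumr; apply: eq_bigr => i _; rewrite !mxE mulrA. Qed.

Lemma innerNl y u : inner (- y) u = - inner y u.
Proof. by rewrite /inner -sumrN; apply: eq_bigr => i _; rewrite !mxE mulNr. Qed.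

Lemma inner_onesl u : inner ones u = \sum_i u ord0 i.
Proof. by apply: eq_bigr => i _; rewrite !mxE mul1r. Qed.

Lemma inner_ebasisl b u : inner (ebasis b) u = u ord0 b.
Proof.
rewrite /inner (bigD1 b) //= big1 ?addr0; first by rewrite !mxE eqxx mul1r.
by move=> i ib; rewrite !mxE (negbTE ib) mul0r.
Qed.

Lemma inner_ebasisr b u : inner u (ebasis b) = u ord0 b.
Proof.
rewrite /inner (bigD1 b) //= big1 ?addr0; first by rewrite !mxE eqxx mulr1.
by move=> i ib; rewrite !mxE (negbTE ib) mulr0.
Qed.

Lemma continuous_inner y : continuous (inner y).
Proof.
move=> x; rewrite /inner.
have -> : (fun z : 'rV[R]_n => \sum_i y ord0 i * z ord0 i) =
          \sum_i (fun z : 'rV[R]_n => y ord0 i * z ord0 i).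
  by apply/funext => z; rewrite fct_sumE.
apply: (big_ind (fun f : 'rV[R]_n -> R => {for x, continuous f})).
- exact: cst_continuous.
- by move=> f g cf cg; apply: (@continuousD R R^o).
- move=> i _; apply: continuousM; first exact: cst_continuous.
  exact: (@coord_continuous R 1 n ord0 i).
Qed.

Lemma simplex_ebasis b : simplex (@ebasis R n b).
Proof. by split=> [i|]; rewrite ?mxE ?ler0n // -inner_onesl inner_ebasisr mxE. Qed.

Lemma simplex_conv x1 x2 t : simplex x1 -> simplex x2 -> 0 <= t <= 1 ->
  simplex (t *: x1 + (1 - t) *: x2).
Proof.
move=> [x1_ge0 x1_sum] [x2_ge0 x2_sum] /andP[t_ge0 t_le1]; split.
  by move=> i; rewrite !mxE addr_ge0 ?mulr_ge0 ?subr_ge0.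
by rewrite -inner_onesl innerDr !innerZr !inner_onesl x1_sum x2_sum; lra.
Qed.

Lemma simplex_closed : closed (@simplex R n).
Proof.
have -> : @simplex R n =
    \bigcap_(i in [set: 'I_n]) ((fun x => x ord0 i) @^-1` [set r | 0 <= r])
    `&` (inner ones @^-1` [set 1]).
  apply/seteqP; split=> [x [x_ge0 x_sum]|x [x_ge0 x_sum]].
    by split=> [i _|]; rewrite /= ?inner_onesl.
  by split=> [i|]; [exact: x_ge0 | rewrite -inner_onesl].
apply: closedI.
  apply: closed_bigI => i _.
  exact: (continuous_closedP _).1 (@coord_continuous R 1 n ord0 i) _ (@closed_ge R 0).
apply: (continuous_closedP _).1; [exact: continuous_inner | exact: closed_eq].
Qed.

Lemma simplex_compact : compact (@simplex R n).
Proof.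
apply: (subclosed_compact simplex_closed
  (@rV_compact _ n (fun=> `[(0:R), 1]%classic) (fun=> @segment_compact R 0 1))).
move=> x [x_ge0 x_sum] i /=; rewrite in_itv /= x_ge0 /= -x_sum (bigD1 i) //=.
by rewrite lerDl sumr_ge0.
Qed.

Lemma argmax_exists h y : (0 < n)%N -> {within simplex, continuous h} ->
  exists x, is_argmax h y x.
Proof.
move=> n_gt0 ch.
have cf : {within simplex, continuous (fun x => inner y x - h x)}.
  move=> x; apply: (@continuousD R R^o).
    exact: (continuous_subspaceT (continuous_inner y)).
  by apply: (@continuousN R R^o); exact: ch.
have nz : (@simplex R n) !=set0 by exists (ebasis (Ordinal n_gt0)); exact: simplex_ebasis.
have [x xS xmax] := EVT_max_rV nz simplex_compact cf.
by exists x; split=> [|x' x'S]; [rewrite -inE | apply: xmax; rewrite inE].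
Qed.

Lemma oscillation_bounded h : (0 < n)%N -> {within simplex, continuous h} ->
  exists M, forall x x', simplex x -> simplex x' -> h x' - h x <= M.
Proof.
move=> n_gt0 ch.
have nz : (@simplex R n) !=set0 by exists (ebasis (Ordinal n_gt0)); exact: simplex_ebasis.
have [xM _ hM] := EVT_max_rV nz simplex_compact ch.
have [xm _ hm] := EVT_min_rV nz simplex_compact ch.
exists (h xM - h xm) => x x' xS x'S.
by rewrite lerB // ?hM ?hm ?inE.
Qed.

(** Strong convexity is used only through strict midpoint convexity. *)
Lemma penalty_midpoint_lt h x1 x2 : penalty h -> simplex x1 -> simplex x2 ->
  x1 != x2 -> h (2^-1 *: x1 + 2^-1 *: x2) < 2^-1 * h x1 + 2^-1 * h x2.
Proof.
move=> [_ [_ [K [N [K_gt0 [[N_eq0 _] hconv]]]]]] x1S x2S x12.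
have half : 0 <= (2^-1 : R) <= 1 by apply/andP; split; lra.
have := hconv _ _ x1S x2S _ half.
have -> : 1 - 2^-1 = (2^-1 : R) by lra.
have N_gt0 : 0 < N (x1 - x2) ^+ 2.
  rewrite exprn_even_gt0 //; apply/negP => /eqP /N_eq0 /eqP.
  by rewrite subr_eq0 (negbTE x12).
have := mulr_gt0 K_gt0 N_gt0.
lra.
Qed.

Lemma argmax_unique h y x1 x2 : penalty h ->
  is_argmax h y x1 -> is_argmax h y x2 -> x1 = x2.
Proof.
move=> ph [x1S x1max] [x2S x2max]; apply/eqP/negPn/negP => x12.
have half : 0 <= (2^-1 : R) <= 1 by apply/andP; split; lra.
have midS := simplex_conv _ _ _ x1S x2S half.
have half_compl : 1 - 2^-1 = (2^-1 : R) by lra.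
rewrite half_compl in midS.
have := x1max _ midS; rewrite innerDr !innerZr.
have := penalty_midpoint_lt _ _ _ ph x1S x2S x12.
have := x1max _ x2S; have := x2max _ x1S.
lra.
Qed.

Lemma choice_mapE h y x : penalty h -> is_argmax h y x -> choice_map h y = x.
Proof.
by move=> ph xmax; apply: (argmax_unique _ _ _ _ ph _ xmax); apply: xgetPex; exists x.
Qed.

Lemma choice_map_argmax h y : penalty h -> (0 < n)%N -> is_argmax h y (choice_map h y).
Proof. by move=> ph n_gt0; apply: xgetPex; apply: argmax_exists (proj1 ph). Qed.

Lemma is_argmax_shift_ones h y c x : is_argmax h (y + c *: ones) x <-> is_argmax h y x.
Proof.
suff shift x' : simplex x' -> inner (y + c *: ones) x' - h x' = inner y x' - h x' + c.
  split=> [] [xS xmax]; split=> // x' x'S; have := xmax x' x'S;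
    rewrite !shift //; lra.
by move=> [_ x'_sum]; rewrite innerDl innerZl inner_onesl x'_sum mulr1; lra.
Qed.

Lemma is_argmax_lower_unused h y x b t : 0 <= t -> x ord0 b = 0 ->
  is_argmax h y x -> is_argmax h (y - t *: ebasis b) x.
Proof.
move=> t_ge0 xb0 [xS xmax]; split=> // x' [x'_ge0 x'_sum].
rewrite !innerDl !innerNl !innerZl !inner_ebasisl xb0 mulr0 subr0.
have := xmax x' (conj x'_ge0 x'_sum); have := mulr_ge0 t_ge0 (x'_ge0 b).
lra.
Qed.

Definition mass_transfer x (a b : 'I_n) : 'rV[R]_n :=
  x + x ord0 a *: (ebasis b - ebasis a).

Lemma simplex_mass_transfer x a b : b != a -> simplex x -> simplex (mass_transfer x a b).
Proof.
move=> ba [x_ge0 x_sum]; split.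
  move=> i; rewrite !mxE; have [->|ia] := eqVneq i a.
    by rewrite eq_sym (negbTE ba) /= mulr0n mulr1n sub0r mulrN1 subrr.
  by rewrite mulr0n subr0 addr_ge0 ?mulr_ge0 ?ler0n.
rewrite -inner_onesl innerDr innerZr innerBr !inner_onesl x_sum.
by rewrite -!inner_onesl !inner_ebasisr !mxE subrr mulr0 addr0.
Qed.

Lemma argmax_mass_transfer h y x a b : b != a -> is_argmax h y x ->
  x ord0 a * (y ord0 b - y ord0 a) <= h (mass_transfer x a b) - h x.
Proof.
move=> ba [xS xmax]; have := xmax _ (simplex_mass_transfer _ _ _ ba xS).
by rewrite innerDr innerZr innerBr !inner_ebasisr; lra.
Qed.

End ChoiceMap.

Lemma le_of_mul_le_bounded (R : realFieldType) (M e d x : R) : 0 <= M -> 0 < e ->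
  (M + 1) / e <= d -> x * d <= M -> x <= e.
Proof.
move=> M_ge0 e_gt0 d_ge xd_le; rewrite leNgt; apply/negP => e_lt_x.
have : (M + 1) / e * e = M + 1 by rewrite mulfVK ?gt_eqF.
have : 0 < (M + 1) / e by rewrite divr_gt0 //; lra.
move: d_ge; set w := (M + 1) / e => d_ge w_gt0 we.
have : e * w < x * w by rewrite ltr_pM2r.
have : x * w <= x * d by rewrite ler_wpM2l //; lra.
lra.
Qed.

Theorem propositionA1 (R : realType) (n : nat) (h : 'rV[R]_n -> R) :
  penalty h ->
  (forall y y' : 'rV[R]_n, (exists c : R, y' - y = c *: ones) ->
      choice_map h y' = choice_map h y) /\
  (forall (y : 'rV[R]_n) (b : 'I_n) (t : R), 0 <= t ->
      choice_map h y ord0 b = 0 ->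
      choice_map h (y - t *: ebasis b) = choice_map h y) /\
  (forall (ys : nat -> 'rV[R]_n) (a b : 'I_n), b != a ->
      (fun j => ys j ord0 a - ys j ord0 b) @ \oo --> -oo ->
      (fun j => choice_map h (ys j) ord0 a) @ \oo --> 0).
Proof.
move=> ph; split; [|split].
- move=> y y' [c y'E]; rewrite -(subrK y y') y'E addrC /choice_map.
  by congr (xget 0 _); apply/seteqP; split=> x /= /is_argmax_shift_ones.
- move=> y b t t_ge0 Qb0.
  have n_gt0 : (0 < n)%N := leq_ltn_trans (leq0n b) (ltn_ord b).
  exact/choice_mapE/is_argmax_lower_unused/choice_map_argmax.
- move=> ys a b ba ys_gap.
  have n_gt0 : (0 < n)%N := leq_ltn_trans (leq0n a) (ltn_ord a).
  have [M oscM] := oscillation_bounded _ n_gt0 (proj1 ph).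
  have M_ge0 : 0 <= M by have := oscM _ _ (simplex_ebasis a) (simplex_ebasis a); lra.
  apply/cvgr0Pnorm_le => e e_gt0; near=> j.
  have [xS _] := choice_map_argmax h (ys j) ph n_gt0.
  rewrite ger0_norm ?xS.1 //.
  apply: (le_of_mul_le_bounded _ _ _ (ys j ord0 b - ys j ord0 a) _ M_ge0 e_gt0).
    suff : ys j ord0 a - ys j ord0 b <= - ((M + 1) / e) by lra.
    by near: j; apply: cvgrNy_le.
  apply: le_trans (argmax_mass_transfer _ _ _ _ _ ba (choice_map_argmax _ _ ph n_gt0)) _.
  exact: oscM (simplex_mass_transfer _ _ _ ba xS).
Unshelve. all: end_near.
Qed.
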